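(* Let $T$ be a finite semi-simplicial triangulation of a compact surface $S$, possibly with boundary, and let $\delta: E(T) \to \mathbb{R}$ be a weight (dihedral angle) on the edges. The following are equivalent: (a) for every non-empty subcomplex $\mathcal{F}$ of $T$, $$\sum_{e \in E'(\mathcal{F})} n_{\mathcal{F}}(e)\, \delta'(e) \ge 2\pi \chi(\mathcal{F}) - K(\mathcal{F}),$$ with equality if and only if $\mathcal{F} = T$; (b) $\delta(e) > 0$ for all $e \in E(T)$, and for every set of faces $\mathcal{G} \subseteq F(T)$, writing $E(\mathcal{G})$ for the set of edges incident to some face in $\mathcal{G}$, $\sum_{e \in E(\mathcal{G})} \delta(e) \ge \pi|\mathcal{G}|$, with equality if and only if $\mathcal{G} = F(T)$ or $E(\mathcal{G}) = \emptyset$.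
   Context: $V(T),E(T),F(T)$ denote vertices, edges, faces of $T$. The exterior dihedral angle is $\delta'(e) = \pi - \delta(e)$. For a vertex $v$, the cone angle is $C_v = \sum_{e \text{ incident to } v} \delta'(e)$ and the curvature is $\kappa_v = 2\pi - C_v$. For a subcomplex $\mathcal{F}$, its total curvature is $K(\mathcal{F}) = \sum_{v \in V(\mathcal{F})} \kappa_v$, and $\chi(\mathcal{F})$ is its Euler characteristic. $E'(\mathcal{F})$ is the set of edges of $T$ that are not edges of faces of $\mathcal{F}$ but have at least one endpoint in $\mathcal{F}$, and for an edge $e$, $n_{\mathcal{F}}(e)$ is the number of endpoints of $e$ belonging to $\mathcal{F}$. *)

From HB Require Import structures.
From mathcomp Require Import all_boot all_order all_algebra.
From mathcomp Require Import reals trigo.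

Set Implicit Arguments.
Unset Strict Implicit.
Unset Printing Implicit Defensive.

Import Order.TTheory GRing.Theory Num.Theory.
Local Open Scope ring_scope.

(* A finite 2-dimensional semi-simplicial set (Delta-complex).
   An edge e goes from [src e] (vertex 0) to [tgt e] (vertex 1).
   A face f with ordered vertices v0,v1,v2 has boundary edges
   [bd0 f] = [v1,v2], [bd1 f] = [v0,v2], [bd2 f] = [v0,v1]
   (bd_i f is the i-th face map, i.e. the edge opposite vertex i). *)
Record dcomplex := DComplex {
  vert : finType;
  edge : finType;
  face : finType;
  src : edge -> vert;
  tgt : edge -> vert;
  bd0 : face -> edge;
  bd1 : face -> edge;
  bd2 : face -> edge }.

Section Defs.
Variable T : dcomplex.

Definition bd (f : face T) (i : 'I_3) : edge T :=
  match val i with 0 => bd0 f | 1 => bd1 f | _ => bd2 f end.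

Definition simplicial_ids : Prop :=
  forall f : face T,
    [/\ src (bd2 f) = src (bd1 f),
        tgt (bd2 f) = src (bd0 f) &
        tgt (bd1 f) = tgt (bd0 f)].

Definition endv (x : edge T * bool) : vert T :=
  if x.2 then tgt x.1 else src x.1.

Definition corner_ends (f : face T) (j : 'I_3) :
    (edge T * bool) * (edge T * bool) :=
  match val j with
  | 0 => ((bd2 f, false), (bd1 f, false))
  | 1 => ((bd2 f, true), (bd0 f, false))
  | _ => ((bd1 f, true), (bd0 f, true))
  end.

Definition corner_vertex (f : face T) (j : 'I_3) : vert T :=
  endv (corner_ends f j).1.

(* adjacency in the link of vertex v: link-vertices are the edge-ends at v,
   link-edges are the corners of faces at v *)
Definition link_adj (v : vert T) : rel (edge T * bool) :=
  fun a b => [exists f : face T, exists j : 'I_3,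
    (corner_vertex f j == v) &&
    ((corner_ends f j == (a, b)) || (corner_ends f j == (b, a)))].

Definition face_slots (e : edge T) : nat :=
  #|[set p : face T * 'I_3 | bd p.1 p.2 == e]|.

(* T is a (finite, semi-simplicial) triangulation of a compact surface,
   possibly with boundary: every edge lies in one or two face slots, and
   the link of every vertex is non-empty and connected (hence a path or a
   cycle, since all its vertices have degree 1 or 2). *)
Definition surface_triangulation : Prop :=
  [/\ simplicial_ids,
      (forall e : edge T, 1 <= face_slots e <= 2)%N &
      (forall v : vert T,
         (exists x, endv x = v) /\
         (forall x y, endv x = v -> endv y = v -> connect (link_adj v) x y))].

Definition subcomplex (Vs : {set vert T}) (Es : {set edge T})
    (Fs : {set face T}) : Prop :=
  (forall e, e \in Es -> src e \in Vs /\ tgt e \in Vs) /\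
  (forall f, f \in Fs -> [/\ bd0 f \in Es, bd1 f \in Es & bd2 f \in Es]).

(* number of endpoints of e equal to v (a loop counts twice) *)
Definition incid (v : vert T) (e : edge T) : nat :=
  ((src e == v) + (tgt e == v))%N.

Definition nF (Vs : {set vert T}) (e : edge T) : nat :=
  ((src e \in Vs) + (tgt e \in Vs))%N.

Definition Eprime (Vs : {set vert T}) (Es : {set edge T}) : {set edge T} :=
  [set e | (e \notin Es) && ((src e \in Vs) || (tgt e \in Vs))].

Definition edges_of (G : {set face T}) : {set edge T} :=
  [set e | [exists f in G, [|| bd0 f == e, bd1 f == e | bd2 f == e]]].

Variable R : realType.
Variable delta : edge T -> R.

Definition ext_angle (e : edge T) : R := pi - delta e.

Definition cone_angle (v : vert T) : R :=
  \sum_(e : edge T) (incid v e)%:R * ext_angle e.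

Definition curvature (v : vert T) : R := 2 * pi - cone_angle v.

Definition total_curvature (Vs : {set vert T}) : R :=
  \sum_(v in Vs) curvature v.

End Defs.

Definition euler_char (T : dcomplex) (Vs : {set vert T}) (Es : {set edge T})
    (Fs : {set face T}) : int :=
  (#|Vs|%:Z - #|Es|%:Z + #|Fs|%:Z)%R.

From HB Require Import structures.
From mathcomp Require Import all_boot all_order all_algebra.
From mathcomp Require Import reals trigo.
From mathcomp Require Import lra.
Set Implicit Arguments.
Unset Strict Implicit.
Unset Printing Implicit Defensive.

Import Order.TTheory GRing.Theory Num.Theory.
Local Open Scope ring_scope.

(* Counting cone angles edge by edge, an edge of a subcomplex F contributes
   its exterior angle twice to K(F) and an edge of E'(F) contributes it
   n_F(e) times; with chi(F) = |V| - |E| + |F| this gives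
     2 pi chi(F) - K(F) = sum_{E'(F)} n_F delta' - 2 (sum_{E(F)} delta - pi |F(F)|).
   Hence (a) says that the excess sum_{E(F)} delta - pi |F(F)| is nonnegative
   on non-empty subcomplexes and vanishes only on T.  A single edge without
   faces forces delta > 0, and a set of faces G spans the subcomplex
   (V(T), E(G), G), whose excess is the quantity in (b).  Conversely, the
   excess of a subcomplex exceeds that of its set of faces by the weights of
   its edges bounding none of its faces, which are positive by (b). *)

Lemma sum_eq_mem (I : finType) (A : {set I}) (x : I) :
  (\sum_(i in A) (x == i) = (x \in A : nat))%N.
Proof.
have [xA|xNA] := boolP (x \in A).
  rewrite (bigD1 x) //= eqxx big1 // => i /andP[_ ix].
  by rewrite eq_sym (negbTE ix).
by rewrite big1 // => i iA; apply/eqP; rewrite eqb0; apply: contraNneq xNA => ->.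
Qed.

Section SubsetSum.
Variables (R : numDomainType) (I : finType) (f : I -> R).
Hypothesis f_gt0 : forall i, 0 < f i.

Lemma leif_sum_subset (A B : {set I}) :
  A \subset B -> \sum_(i in A) f i <= \sum_(i in B) f i ?= iff (B \subset A).
Proof.
move=> AB; rewrite [\sum_(i in B) _](big_setID A) /= (setIidPr AB).
have DBA_ge0 : 0 <= \sum_(i in B :\: A) f i by apply: sumr_ge0 => i _; exact: ltW.
split; first by rewrite lerDl.
rewrite eq_sym -subr_eq0 addrAC subrr add0r -setD_eq0.
apply/eqP/eqP => [DBA0|->]; last by rewrite big_set0.
apply/setP => i; rewrite in_set0; apply/negP => iBA.
by have /eqP := psumr_eq0P (fun i _ => ltW (f_gt0 i)) DBA0 iBA; rewrite gt_eqF.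
Qed.

End SubsetSum.

Lemma set1_neq0 (I : finType) (x : I) : [set x] != set0.
Proof. by apply/set0Pn; exists x; rewrite inE. Qed.

Section Combinatorics.
Variable T : dcomplex.
Implicit Types (Vs : {set vert T}) (Es : {set edge T}) (G Fs : {set face T}).

Lemma bd_in_edges_of G f :
  f \in G -> [/\ bd0 f \in edges_of G, bd1 f \in edges_of G & bd2 f \in edges_of G].
Proof. by move=> fG; split; rewrite inE; apply/existsP; exists f; rewrite fG eqxx ?orbT. Qed.

Lemma edges_of_eq0 G : (edges_of G == set0) = (G == set0).
Proof.
apply/eqP/eqP => [EG0|->].
  apply/setP => f; rewrite in_set0; apply/negP => /bd_in_edges_of[+ _ _].
  by rewrite EG0 inE.
by apply/setP => e; rewrite !inE; apply/existsP => -[f]; rewrite inE.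
Qed.

Lemma edges_of_sub Vs Es Fs : subcomplex Vs Es Fs -> edges_of Fs \subset Es.
Proof.
case=> _ FsEs; apply/subsetP => e; rewrite inE => /existsP[f /andP[fFs]].
by have [? ? ?] := FsEs f fFs; case/or3P => /eqP <-.
Qed.

Lemma subcomplex_span G : subcomplex [set: vert T] (edges_of G) G.
Proof. by split=> [e _|f /bd_in_edges_of]; rewrite ?inE. Qed.

Lemma subcomplex_edge e : subcomplex [set: vert T] [set e] set0.
Proof. by split=> [e' _|f]; rewrite ?inE. Qed.

Hypothesis surfT : surface_triangulation T.

Lemma edges_of_setT : edges_of [set: face T] = setT.
Proof.
case: surfT => _ slots _; apply/setP => e; rewrite !inE.
have /andP[+ _] := slots e; rewrite card_gt0 => /set0Pn[[f i]].
rewrite inE /= => /eqP <-; apply/existsP; exists f; rewrite inE /bd.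
by case: i => [[|[|[|]]]] //= _; rewrite eqxx ?orbT.
Qed.

Lemma subcomplex_all_edges Vs Fs : subcomplex Vs setT Fs -> Vs = setT.
Proof.
case=> EsVs _; apply/setP => v; rewrite inE.
case: surfT => _ _ /(_ v)[[[e b] <-] _].
by have [? ?] := EsVs e (in_setT e); case: b.
Qed.

End Combinatorics.

Section AngleSums.
Variables (R : realType) (T : dcomplex) (delta : edge T -> R).

Lemma total_curvatureE (Vs : {set vert T}) :
  total_curvature delta Vs =
  2 * pi * #|Vs|%:R - \sum_e (nF Vs e)%:R * ext_angle delta e.
Proof.
rewrite /total_curvature /curvature /cone_angle big_split /= sumrN sumr_const.
rewrite mulr_natr exchange_big /=; congr (_ - _); apply: eq_bigr => e _.
by rewrite -mulr_suml -natr_sum /incid big_split /= !sum_eq_mem.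
Qed.

Lemma sum_nF_ext_angle (Vs : {set vert T}) (Es : {set edge T}) :
  (forall e, e \in Es -> src e \in Vs /\ tgt e \in Vs) ->
  \sum_e (nF Vs e)%:R * ext_angle delta e =
  \sum_(e in Es) 2 * ext_angle delta e +
  \sum_(e in Eprime Vs Es) (nF Vs e)%:R * ext_angle delta e.
Proof.
move=> EsVs; rewrite [in RHS]big_mkcond [X in _ + X]big_mkcond -big_split /=.
apply: eq_bigr => e _; rewrite /Eprime inE.
have [eEs|eNEs] /= := boolP (e \in Es).
  by have [sV tV] := EsVs e eEs; rewrite /nF sV tV addr0.
by rewrite add0r /nF; case: (src e \in Vs); case: (tgt e \in Vs); rewrite ?mul0r.
Qed.

Lemma curvature_angle_excess (Vs : {set vert T}) Es Fs :
  subcomplex Vs Es Fs ->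
  2 * pi * (euler_char Vs Es Fs)%:~R - total_curvature delta Vs =
  \sum_(e in Eprime Vs Es) (nF Vs e)%:R * ext_angle delta e
  - 2 * (\sum_(e in Es) delta e - pi * #|Fs|%:R).
Proof.
case=> /sum_nF_ext_angle EsVs _; rewrite total_curvatureE EsVs.
rewrite -mulr_sumr /ext_angle big_split /= sumrN sumr_const /euler_char.
rewrite rmorphD rmorphB /= -!pmulrn; lra.
Qed.

End AngleSums.

Section Conditions.
Variables (R : realType) (T : dcomplex) (delta : edge T -> R).

Definition curvature_condition : Prop :=
  forall (Vs : {set vert T}) (Es : {set edge T}) (Fs : {set face T}),
    subcomplex Vs Es Fs -> Es != set0 ->
    let lhs := \sum_(e in Eprime Vs Es) (nF Vs e)%:R * ext_angle delta e in
    let rhs := 2 * pi * (euler_char Vs Es Fs)%:~R - total_curvature delta Vs in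
    rhs <= lhs /\ (lhs = rhs <-> [/\ Vs = setT, Es = setT & Fs = setT]).

Definition subcomplex_angle_condition : Prop :=
  forall (Vs : {set vert T}) (Es : {set edge T}) (Fs : {set face T}),
    subcomplex Vs Es Fs -> Es != set0 ->
    pi * #|Fs|%:R <= \sum_(e in Es) delta e /\
    (\sum_(e in Es) delta e = pi * #|Fs|%:R <-> [/\ Vs = setT, Es = setT & Fs = setT]).

Definition face_angle_condition : Prop :=
  (forall e : edge T, 0 < delta e) /\
  (forall G : {set face T},
     pi * #|G|%:R <= \sum_(e in edges_of G) delta e /\
     (\sum_(e in edges_of G) delta e = pi * #|G|%:R <->
        (G = setT \/ edges_of G = set0))).

Lemma curvature_subcomplex_angle_condition :
  curvature_condition <-> subcomplex_angle_condition.
Proof.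
split=> cond Vs Es Fs sub Es_neq0; have := cond Vs Es Fs sub Es_neq0;
  rewrite /= (curvature_angle_excess delta sub) => -[le_sum eq_sum];
  (split; [lra | rewrite -eq_sum; lra]).
Qed.

Hypothesis surfT : surface_triangulation T.

Lemma face_of_subcomplex_angle_condition :
  subcomplex_angle_condition -> face_angle_condition.
Proof.
move=> cond; split=> [e|G].
  have := cond _ _ _ (subcomplex_edge e) (set1_neq0 e).
  rewrite big_set1 cards0 mulr0 lt_def => -[-> eq0]; rewrite andbT.
  apply/eqP => /eq0[_ _ F0].
  have := in_setT e; rewrite -(edges_of_setT surfT) -F0 inE.
  by case/existsP => f; rewrite inE.
have [EG0|EG_neq0] := eqVneq (edges_of G) set0.
  have /eqP := EG0; rewrite edges_of_eq0 => /eqP G0.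
  by rewrite EG0 G0 big_set0 cards0 mulr0; split=> //; split=> //; right.
have [le_sum eq_sum] := cond _ _ _ (subcomplex_span G) EG_neq0.
split=> //; split=> [/eq_sum[_ _]|[GT|EG0]]; [by left | | by rewrite EG0 eqxx in EG_neq0].
by apply/eq_sum; rewrite GT edges_of_setT.
Qed.

Lemma subcomplex_of_face_angle_condition :
  face_angle_condition -> subcomplex_angle_condition.
Proof.
move=> [delta_gt0 faces] Vs Es Fs sub Es_neq0.
have EFs_sub := edges_of_sub sub.
have [le_EFs eq_EFs] := leif_sum_subset delta_gt0 EFs_sub.
have [le_Fs eq_Fs] := faces Fs.
split; first exact: le_trans le_EFs.
split=> [eq_sum|[_ -> FsT]]; last first.
  by have := eq_Fs.2 (or_introl FsT); rewrite FsT edges_of_setT.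
have sum_EFs : \sum_(e in edges_of Fs) delta e = pi * #|Fs|%:R.
  by apply/eqP; rewrite eq_le le_Fs -eq_sum le_EFs.
have Es_sub : Es \subset edges_of Fs by rewrite -eq_EFs sum_EFs eq_sum.
case/eq_Fs: sum_EFs => [FsT|EFs0]; last first.
  by move: Es_sub; rewrite EFs0 subset0 (negbTE Es_neq0).
have ET : Es = setT.
  by apply/eqP; rewrite eqEsubset subsetT -(edges_of_setT surfT) -FsT.
by move: sub; rewrite ET => /(subcomplex_all_edges surfT).
Qed.

End Conditions.

Theorem theorem4p3 (R : realType) (T : dcomplex) (delta : edge T -> R) :
  surface_triangulation T ->
  ( (* (a) *)
    (forall (Vs : {set vert T}) (Es : {set edge T}) (Fs : {set face T}),
       subcomplex Vs Es Fs -> Es != set0 ->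
       let lhs := \sum_(e in Eprime Vs Es) (nF Vs e)%:R * ext_angle delta e in
       let rhs := 2 * pi * (euler_char Vs Es Fs)%:~R
                  - total_curvature delta Vs in
       rhs <= lhs /\
       (lhs = rhs <-> [/\ Vs = setT, Es = setT & Fs = setT]))
  <->
    (* (b) *)
    ((forall e : edge T, 0 < delta e) /\
     (forall G : {set face T},
        pi * #|G|%:R <= \sum_(e in edges_of G) delta e /\
        (\sum_(e in edges_of G) delta e = pi * #|G|%:R <->
           (G = setT \/ edges_of G = set0))))).
Proof.
move=> surfT.
apply: (iff_trans (curvature_subcomplex_angle_condition delta)).
change (subcomplex_angle_condition delta <-> face_angle_condition delta).
split; [exact: face_of_subcomplex_angle_condition | exact: subcomplex_of_face_angle_condition].
Qed.
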